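(* Let $d\ge1$, $t\in\mathbb R$, $\epsilon\ge0$, and let $\Phi=(\phi_0,\dots,\phi_d)\in\mathbb R^{d+1}$ satisfy $\max_{x\in[-1,1]}|P(x,\Phi)-s_t(x)|\le\epsilon$. For an integer $r\ge1$ define the concatenated phase sequence $$\Phi^{(r)}:=\big(\phi_0,\phi_1,\dots,\phi_{d-1},\underbrace{\phi_d+\phi_0,\phi_1,\dots,\phi_{d-1}}_{\text{repeated } r-1\text{ times}},\phi_d\big)\in\mathbb R^{rd+1}.$$ Then $\max_{x\in[-1,1]}|P(x,\Phi^{(r)})-s_{rt}(x)|\le r^2\epsilon$.
   Context: For phases $\Phi=(\phi_0,\dots,\phi_D)\in\mathbb R^{D+1}$ and $x\in[-1,1]$, let $W(x):=\begin{pmatrix}x& i\sqrt{1-x^2}\\ i\sqrt{1-x^2}&x\end{pmatrix}$, $Z=\mathrm{diag}(1,-1)$, $U(x,\Phi):=e^{i\phi_0Z}\prod_{j=1}^D\big[W(x)e^{i\phi_jZ}\big]$, and $P(x,\Phi):=\langle0|U(x,\Phi)|0\rangle$ (the upper-left entry). Also $s_t(x):=e^{-itx^2}$. *)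

From Stdlib Require Import Reals List.
From Coquelicot Require Import Coquelicot.
Import ListNotations.
Open Scope R_scope.

(* 2x2 complex matrices ((a, b), (c, d)) = [[a, b], [c, d]] *)
Definition Mat2 : Type := ((C * C) * (C * C))%type.

Definition mmul (A B : Mat2) : Mat2 :=
  let '((a11, a12), (a21, a22)) := A in
  let '((b11, b12), (b21, b22)) := B in
  ((Cplus (Cmult a11 b11) (Cmult a12 b21), Cplus (Cmult a11 b12) (Cmult a12 b22)),
   (Cplus (Cmult a21 b11) (Cmult a22 b21), Cplus (Cmult a21 b12) (Cmult a22 b22))).

Definition mid2 : Mat2 := ((RtoC 1, RtoC 0), (RtoC 0, RtoC 1)).

Definition cis (th : R) : C := (cos th, sin th).

Definition Wsig (x : R) : Mat2 :=
  let s : C := (0, sqrt (1 - x ^ 2)) in ((RtoC x, s), (s, RtoC x)).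

Definition expZ (phi : R) : Mat2 := ((cis phi, RtoC 0), (RtoC 0, cis (- phi))).

Fixpoint Wprod (x : R) (l : list R) : Mat2 :=
  match l with
  | [] => mid2
  | phi :: l' => mmul (mmul (Wsig x) (expZ phi)) (Wprod x l')
  end.

Definition Uqsp (x : R) (Phi : list R) : Mat2 :=
  match Phi with
  | [] => mid2
  | phi0 :: rest => mmul (expZ phi0) (Wprod x rest)
  end.

Definition Pqsp (x : R) (Phi : list R) : C := fst (fst (Uqsp x Phi)).

Definition s_t (t x : R) : C := cis (- (t * x ^ 2)).

Definition concat_phases (d r : nat) (Phi : list R) : list R :=
  let phi0 := nth 0 Phi 0 in
  let phid := nth d Phi 0 in
  let mid := firstn (d - 1) (tl Phi) in
  firstn d Phi ++ concat (repeat ((phid + phi0) :: mid) (r - 1)) ++ [phid].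

(* The proof has an algebraic and an analytic half.
   - Algebra: in U(x, Phi)^r the last rotation e^{i phi_d Z} of one copy and
     the first rotation e^{i phi_0 Z} of the next copy merge into
     e^{i (phi_d + phi_0) Z}; hence U(x, Phi^(r)) = U(x, Phi)^r
     ([Uqsp_concat_phases]).
   - Analysis: every QSP unitary lies in SU(2), i.e. has the form
     [[a, c], [-conj c, conj a]] with |a|^2 + |c|^2 = 1 ([SU_Uqsp]).  If
     |a - e^{i th}| <= eps then |c|^2 <= 2 eps, and by induction the k-th
     power [[a_k, c_k], ...] satisfies |a_k - e^{i k th}| <= k^2 eps and
     |c_k| <= k |c|: the new error is at most
     eps + k^2 eps + k |c|^2 <= (k + 1)^2 eps ([su_power_error]).
   The theorem is the case th = -t x^2, for which e^{i k th} = s_{kt}(x). *)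
From Stdlib Require Import Reals List Lra Lia.
From Coquelicot Require Import Coquelicot.
Import ListNotations.
Open Scope R_scope.

Ltac destruct_mat M := destruct M as [[[? ?] [? ?]] [[? ?] [? ?]]].
Ltac unfold_C := unfold mmul, Cminus, Cplus, Cmult, Copp, Cconj, RtoC in *; simpl.
Ltac entrywise := repeat match goal with |- (_, _) = (_, _) => f_equal end.

Lemma mmul_assoc A B D : mmul A (mmul B D) = mmul (mmul A B) D.
Proof. destruct_mat A; destruct_mat B; destruct_mat D; unfold_C; entrywise; ring. Qed.

Lemma mmul_1l A : mmul mid2 A = A.
Proof. destruct_mat A; unfold mid2; unfold_C; entrywise; ring. Qed.

Lemma mmul_1r A : mmul A mid2 = A.
Proof. destruct_mat A; unfold mid2; unfold_C; entrywise; ring. Qed.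

Fixpoint mpow (M : Mat2) (k : nat) : Mat2 :=
  match k with O => mid2 | S k' => mmul (mpow M k') M end.

Lemma mpow_succ_l M k : mpow M (S k) = mmul M (mpow M k).
Proof.
  induction k as [|k IH]; cbn [mpow] in *.
  - rewrite mmul_1l, mmul_1r; reflexivity.
  - rewrite IH at 1; symmetry; apply mmul_assoc.
Qed.

Lemma mpow_regroup X Y k : mpow (mmul X Y) (S k) = mmul X (mmul (mpow (mmul Y X) k) Y).
Proof.
  induction k as [|k IH].
  - cbn [mpow]; rewrite !mmul_1l; reflexivity.
  - change (mpow (mmul X Y) (S (S k))) with (mmul (mpow (mmul X Y) (S k)) (mmul X Y)).
    rewrite IH; cbn [mpow]; rewrite <- !mmul_assoc; reflexivity.
Qed.

Lemma Wprod_app x l1 l2 : Wprod x (l1 ++ l2) = mmul (Wprod x l1) (Wprod x l2).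
Proof.
  induction l1 as [|p l1 IH]; cbn [Wprod app].
  - rewrite mmul_1l; reflexivity.
  - rewrite IH, mmul_assoc; reflexivity.
Qed.

Lemma Wprod_repeat x B k : Wprod x (concat (repeat B k)) = mpow (Wprod x B) k.
Proof.
  induction k as [|k IH]; cbn [mpow repeat concat]; [reflexivity|].
  rewrite Wprod_app, IH, <- mpow_succ_l; reflexivity.
Qed.

Lemma cis_add a b : cis (a + b) = Cmult (cis a) (cis b).
Proof. unfold cis; unfold_C; rewrite cos_plus, sin_plus; entrywise; ring. Qed.

Lemma Cmod_cis th : Cmod (cis th) = 1.
Proof.
  unfold Cmod, cis; simpl.
  pose proof (sin2_cos2 th) as Hpyth; unfold Rsqr in Hpyth.
  replace (cos th * (cos th * 1) + sin th * (sin th * 1)) with 1 by nra.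
  apply sqrt_1.
Qed.

Lemma expZ_add a b : mmul (expZ a) (expZ b) = expZ (a + b).
Proof.
  unfold expZ; replace (- (a + b)) with (- a + - b) by ring.
  rewrite !cis_add; unfold cis; unfold_C; entrywise; ring.
Qed.

Lemma phases_shape (d : nat) (Phi : list R) :
  (1 <= d)%nat -> length Phi = S d ->
  exists p0 mid z, Phi = p0 :: mid ++ [z] /\ d = S (length mid).
Proof.
  intros Hd Hlen.
  destruct Phi as [|p0 rest]; [discriminate|].
  assert (Hne : rest <> []) by (intros ->; simpl in Hlen; lia).
  destruct (exists_last Hne) as [mid [z ->]].
  exists p0, mid, z; split; [reflexivity|].
  simpl in Hlen; rewrite length_app in Hlen; simpl in Hlen; lia.
Qed.

Lemma Uqsp_concat_phases x d r Phi :
  (1 <= d)%nat -> length Phi = S d -> (1 <= r)%nat ->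
  Uqsp x (concat_phases d r Phi) = mpow (Uqsp x Phi) r.
Proof.
  intros Hd Hlen Hr.
  destruct (phases_shape d Phi Hd Hlen) as [p0 [mid [z [-> ->]]]].
  destruct r as [|r]; [lia|].
  unfold concat_phases; cbn [firstn tl nth].
  replace (S (length mid) - 1)%nat with (length mid) by lia.
  replace (S r - 1)%nat with r by lia.
  assert (Hfirst : forall l, firstn (length mid) (mid ++ l) = mid).
  { clear Hd Hlen; intros l; induction mid as [|m mid IH]; simpl; [reflexivity|]; rewrite IH; reflexivity. }
  assert (Hlast : nth (length mid) (mid ++ [z]) 0 = z).
  { clear Hd Hlen Hfirst; induction mid as [|m mid IH]; simpl; auto. }
  rewrite Hfirst, Hlast; cbn [app Uqsp].
  rewrite !Wprod_app, Wprod_repeat; cbn [Wprod]; rewrite !mmul_1r.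
  set (A := Wprod x mid); set (Y := mmul (Wsig x) (expZ z)).
  rewrite (mmul_assoc (expZ p0) A Y), mpow_regroup.
  assert (Hmerge : mmul Y (mmul (expZ p0) A) = mmul (mmul (Wsig x) (expZ (z + p0))) A).
  { unfold Y; rewrite <- expZ_add, !mmul_assoc; reflexivity. }
  rewrite Hmerge; apply mmul_assoc.
Qed.

Definition su (a c : C) : Mat2 := ((a, c), (Copp (Cconj c), Cconj a)).
Definition norm2 (a : C) : R := fst a ^ 2 + snd a ^ 2.
Definition SU (M : Mat2) : Prop := exists a c, M = su a c /\ norm2 a + norm2 c = 1.

Lemma Cmod_sq a : Cmod a ^ 2 = norm2 a.
Proof. unfold Cmod, norm2; apply pow2_sqrt; simpl; nra. Qed.

Lemma unit_entry_le_1 a c : norm2 a + norm2 c = 1 -> Cmod a <= 1.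
Proof.
  intros Hn; pose proof (Cmod_sq a); pose proof (Cmod_sq c).
  pose proof (Cmod_ge_0 a); pose proof (Cmod_ge_0 c).
  unfold norm2 in *; nra.
Qed.

Lemma su_mul a c b e :
  mmul (su a c) (su b e) =
  su (Cplus (Cmult a b) (Cmult c (Copp (Cconj e))))
     (Cplus (Cmult a e) (Cmult c (Cconj b))).
Proof. destruct a, b, c, e; unfold su; unfold_C; entrywise; ring. Qed.

Lemma su_mul_unit a c b e :
  norm2 a + norm2 c = 1 -> norm2 b + norm2 e = 1 ->
  norm2 (Cplus (Cmult a b) (Cmult c (Copp (Cconj e))))
  + norm2 (Cplus (Cmult a e) (Cmult c (Cconj b))) = 1.
Proof. destruct a, b, c, e; unfold norm2; unfold_C; intros; nra. Qed.

Lemma SU_mul M N : SU M -> SU N -> SU (mmul M N).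
Proof.
  intros [a [c [-> Ha]]] [b [e [-> Hb]]]; rewrite su_mul.
  eexists; eexists; split; [reflexivity|]; apply su_mul_unit; assumption.
Qed.

Lemma su_one : su (RtoC 1) (RtoC 0) = mid2.
Proof. unfold su, mid2; unfold_C; entrywise; ring. Qed.

Lemma SU_id : SU mid2.
Proof. exists (RtoC 1), (RtoC 0); split; [rewrite su_one; reflexivity | unfold norm2; simpl; ring]. Qed.

Lemma SU_Wsig x : -1 <= x <= 1 -> SU (Wsig x).
Proof.
  intros Hx; exists (RtoC x), (0, sqrt (1 - x ^ 2)); split.
  - unfold su, Wsig; unfold_C; entrywise; ring.
  - assert (Hrad : 0 <= 1 - x ^ 2) by nra.
    pose proof (pow2_sqrt _ Hrad); unfold norm2; simpl in *; nra.
Qed.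

Lemma SU_expZ p : SU (expZ p).
Proof.
  exists (cis p), (RtoC 0); split.
  - unfold su, expZ, cis; unfold_C; rewrite cos_neg, sin_neg; entrywise; ring.
  - unfold norm2, cis; simpl; pose proof (sin2_cos2 p); unfold Rsqr in *; nra.
Qed.

Lemma SU_Wprod x l : -1 <= x <= 1 -> SU (Wprod x l).
Proof.
  intros Hx; induction l as [|p l IH]; cbn [Wprod]; [apply SU_id|].
  apply SU_mul; [apply SU_mul; [apply SU_Wsig; assumption | apply SU_expZ] | exact IH].
Qed.

Lemma SU_Uqsp x l : -1 <= x <= 1 -> SU (Uqsp x l).
Proof.
  intros Hx; destruct l as [|p l]; cbn [Uqsp]; [apply SU_id|].
  apply SU_mul; [apply SU_expZ | apply SU_Wprod; assumption].
Qed.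

Section PowerError.
Variables (a c : C) (th eps : R).
Hypothesis Hunit : norm2 a + norm2 c = 1.
Hypothesis Hclose : Cmod (Cminus a (cis th)) <= eps.

Lemma off_diag_small : Cmod c ^ 2 <= 2 * eps.
Proof.
  assert (Hlow : 1 - Cmod a <= eps).
  { rewrite <- (Cmod_cis th).
    replace (cis th) with (Cplus a (Copp (Cminus a (cis th))))
      by (destruct a, (cis th); unfold_C; entrywise; ring).
    pose proof (Cmod_triangle a (Copp (Cminus a (cis th)))) as Htri.
    rewrite Cmod_opp in Htri; lra. }
  pose proof (Cmod_sq a); pose proof (Cmod_sq c); pose proof (Cmod_ge_0 a).
  pose proof (unit_entry_le_1 a c Hunit); nra.
Qed.

Lemma power_error_step (k : nat) ak ck :
  norm2 ak + norm2 ck = 1 ->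
  Cmod (Cminus ak (cis (INR k * th))) <= INR k ^ 2 * eps ->
  Cmod ck <= INR k * Cmod c ->
  Cmod (Cminus (Cplus (Cmult ak a) (Cmult ck (Copp (Cconj c)))) (cis (INR (S k) * th)))
    <= INR (S k) ^ 2 * eps.
Proof.
  intros Hk Hek Hck.
  assert (Hsplit : Cminus (Cplus (Cmult ak a) (Cmult ck (Copp (Cconj c)))) (cis (INR (S k) * th))
    = Cplus (Cplus (Cmult ak (Cminus a (cis th))) (Cmult (Cminus ak (cis (INR k * th))) (cis th)))
            (Cmult ck (Copp (Cconj c)))).
  { rewrite S_INR, Rmult_plus_distr_r, Rmult_1_l, cis_add.
    destruct ak, a, ck, c, (cis th), (cis (INR k * th)); unfold_C; entrywise; ring. }
  rewrite Hsplit, S_INR.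
  eapply Rle_trans; [apply Cmod_triangle|].
  eapply Rle_trans; [apply Rplus_le_compat_r, Cmod_triangle|].
  rewrite !Cmod_mult, Cmod_opp, Cmod_conj, Cmod_cis.
  pose proof (unit_entry_le_1 ak ck Hk); pose proof off_diag_small.
  pose proof (pos_INR k); pose proof (Cmod_ge_0 c); pose proof (Cmod_ge_0 ck).
  pose proof (Cmod_ge_0 ak); pose proof (Cmod_ge_0 (Cminus a (cis th))).
  assert (Cmod ak * Cmod (Cminus a (cis th)) <= eps) by nra.
  assert (Cmod ck * Cmod c <= INR k * (2 * eps)) by nra.
  nra.
Qed.

Lemma su_power_error (k : nat) :
  exists ak ck, mpow (su a c) k = su ak ck /\ norm2 ak + norm2 ck = 1 /\
    Cmod (Cminus ak (cis (INR k * th))) <= INR k ^ 2 * eps /\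
    Cmod ck <= INR k * Cmod c.
Proof.
  induction k as [|k [ak [ck [Hk [Hnk [Hek Hck]]]]]].
  - exists (RtoC 1), (RtoC 0); cbn [mpow INR]; rewrite su_one.
    replace (Cminus (RtoC 1) (cis (0 * th))) with (RtoC 0)
      by (unfold cis; rewrite Rmult_0_l, cos_0, sin_0; unfold_C; entrywise; ring).
    rewrite Cmod_0; unfold norm2; simpl; repeat split; lra.
  - exists (Cplus (Cmult ak a) (Cmult ck (Copp (Cconj c)))),
           (Cplus (Cmult ak c) (Cmult ck (Cconj a))).
    cbn [mpow]; rewrite Hk, su_mul.
    split; [reflexivity|]; split; [apply su_mul_unit; assumption|].
    split; [apply power_error_step; assumption|].
    rewrite S_INR; eapply Rle_trans; [apply Cmod_triangle|].
    rewrite !Cmod_mult, Cmod_conj.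
    pose proof (unit_entry_le_1 a c Hunit); pose proof (unit_entry_le_1 ak ck Hnk).
    pose proof (Cmod_ge_0 a); pose proof (Cmod_ge_0 c); pose proof (Cmod_ge_0 ck).
    nra.
Qed.

End PowerError.

Theorem mainTheorem7 (d : nat) (t eps : R) (Phi : list R) :
  (1 <= d)%nat -> 0 <= eps -> length Phi = S d ->
  (forall x : R, -1 <= x <= 1 -> Cmod (Cminus (Pqsp x Phi) (s_t t x)) <= eps) ->
  forall r : nat, (1 <= r)%nat ->
  forall x : R, -1 <= x <= 1 ->
    Cmod (Cminus (Pqsp x (concat_phases d r Phi)) (s_t (INR r * t) x))
      <= (INR r) ^ 2 * eps.
Proof.
  intros Hd _ Hlen Happrox r Hr x Hx.
  unfold Pqsp; rewrite Uqsp_concat_phases by assumption.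
  destruct (SU_Uqsp x Phi Hx) as [a [c [HU Hunit]]].
  assert (Hclose : Cmod (Cminus a (cis (- (t * x ^ 2)))) <= eps).
  { specialize (Happrox x Hx); unfold Pqsp in Happrox; rewrite HU in Happrox; exact Happrox. }
  destruct (su_power_error a c _ eps Hunit Hclose r) as [ak [ck [Hpow [_ [Herr _]]]]].
  rewrite HU, Hpow; unfold s_t.
  replace (- (INR r * t * x ^ 2)) with (INR r * - (t * x ^ 2)) by ring.
  exact Herr.
Qed.
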